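(* Let $a<b$ be real numbers and let $f$ be a real function differentiable on $[a,b]$ (one-sided derivatives at the endpoints) such that $f(a)=f(b)$ and $a,b$ are $f$-separated. Then there exists $z\in\,]a,b[$ such that $f'(z)=0$ and the points $a,z,b$ are $f'$-separated, i.e. $f'$ is non-constant on $[a,z]$ and $f'$ is non-constant on $[z,b]$.
   Context: For a real function $f$ and real numbers $a<b$, the points $a,b$ are called $f$-separated if $f$ is defined on $[a,b]$ and non-constant there, i.e. there is $c\in[a,b]$ with $f(c)\neq f(a)$. A strictly increasing family of points $a_0<a_1<\dots$ is $f$-separated if every two consecutive points of it are $f$-separated. *)

From Stdlib Require Import Reals Lra.
Open Scope R_scope.

(* a, b are f-separated: a < b and f is non-constant on [a,b]
   (f is a total function, so "defined on [a,b]" is automatic). *)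
Definition f_separated (f : R -> R) (a b : R) : Prop :=
  a < b /\ exists c, a <= c <= b /\ f c <> f a.

(* [l] is the derivative of [f] at [x] relative to the set [D]
   (limit of difference quotients for y -> x, y in D, y <> x).
   For D = [a,b] this gives one-sided derivatives at the endpoints. *)
Definition is_deriv_within (D : R -> Prop) (f : R -> R) (x l : R) : Prop :=
  limit1_in (fun y => (f y - f x) / (y - x)) (fun y => D y /\ y <> x) l x.

(* Extend f by constants outside [a,b]; the extension is continuous and has
   derivative f' on ]a,b[.  Since f is not constant and f a = f b, one of its
   extrema on [a,b] is a value different from f a, attained at an interior point
   z, so f' z = 0.  If f' were constant on [a,z] (or [z,b]) it would vanish there,
   forcing f z = f a (resp. f z = f b). *)
From Stdlib Require Import Reals Lra Classical.
Open Scope R_scope.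

Definition clamp (a b x : R) : R := Rmax a (Rmin b x).

Lemma clamp_id a b x : a <= x <= b -> clamp a b x = x.
Proof. intros. unfold clamp, Rmax, Rmin. repeat destruct Rle_dec; lra. Qed.

Lemma clamp_in a b x : a <= b -> a <= clamp a b x <= b.
Proof. intros. unfold clamp, Rmax, Rmin. repeat destruct Rle_dec; lra. Qed.

Lemma Rabs_clamp_sub_le a b x y :
  a <= x <= b -> Rabs (clamp a b y - x) <= Rabs (y - x).
Proof.
  intros. unfold clamp, Rmax, Rmin.
  repeat destruct Rle_dec; unfold Rabs; repeat destruct Rcase_abs; lra.
Qed.

Lemma is_deriv_within_continuous D f x l :
  is_deriv_within D f x l ->
  forall eps, eps > 0 -> exists d, d > 0 /\
    forall y, D y -> Rabs (y - x) < d -> Rabs (f y - f x) < eps.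
Proof.
  intros Hd eps He.
  destruct (Hd 1 ltac:(lra)) as [d [Hd0 Hq]].
  assert (Hl : 0 < Rabs l + 1) by (pose proof (Rabs_pos l); lra).
  exists (Rmin d (eps / (Rabs l + 1))). split.
  { apply Rmin_pos; [lra | apply Rdiv_lt_0_compat; lra]. }
  intros y Dy Ay.
  destruct (Req_dec y x) as [->|Nyx].
  { unfold Rminus. rewrite Rplus_opp_r, Rabs_R0. lra. }
  assert (Ad : Rabs (y - x) < d) by (eapply Rlt_le_trans; [exact Ay | apply Rmin_l]).
  assert (Ae : Rabs (y - x) < eps / (Rabs l + 1))
    by (eapply Rlt_le_trans; [exact Ay | apply Rmin_r]).
  specialize (Hq y (conj (conj Dy Nyx) Ad)). simpl in Hq. unfold R_dist in Hq.
  assert (Hquot : Rabs ((f y - f x) / (y - x)) <= Rabs l + 1).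
  { replace ((f y - f x) / (y - x)) with (((f y - f x) / (y - x) - l) + l) by ring.
    eapply Rle_trans; [apply Rabs_triang | lra]. }
  replace (f y - f x) with ((f y - f x) / (y - x) * (y - x)) by (field; lra).
  rewrite Rabs_mult.
  apply Rle_lt_trans with ((Rabs l + 1) * Rabs (y - x)).
  { apply Rmult_le_compat_r; [apply Rabs_pos | exact Hquot]. }
  apply (Rmult_lt_compat_l (Rabs l + 1)) in Ae; [| lra].
  replace ((Rabs l + 1) * (eps / (Rabs l + 1))) with eps in Ae by (field; lra).
  exact Ae.
Qed.

Lemma const_of_not_separated (g : R -> R) u v :
  u < v -> ~ f_separated g u v -> forall x, u <= x <= v -> g x = g u.
Proof.
  intros Huv Hns x Hx. apply NNPP. intro Hne.
  apply Hns. split; [exact Huv | exists x; auto].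
Qed.

Section ClampedExtension.

Variables (a b : R) (f f' : R -> R).
Hypothesis Hab : a < b.
Hypothesis Hderiv :
  forall x, a <= x <= b -> is_deriv_within (fun y => a <= y <= b) f x (f' x).

Let ext (y : R) : R := f (clamp a b y).

Lemma ext_id x : a <= x <= b -> ext x = f x.
Proof. intros. unfold ext. now rewrite clamp_id. Qed.

Lemma ext_continuous x : a <= x <= b -> continuity_pt ext x.
Proof.
  intros Hx eps He. simpl. unfold R_dist.
  destruct (is_deriv_within_continuous _ _ _ _ (Hderiv x Hx) eps He) as [d [Hd0 Hy]].
  exists d. split; [exact Hd0 |]. intros y [_ Ay].
  unfold ext. rewrite (clamp_id a b x Hx). apply Hy.
  - apply clamp_in; lra.
  - eapply Rle_lt_trans; [apply Rabs_clamp_sub_le; exact Hx | exact Ay].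
Qed.

Lemma ext_derivative x : a < x < b -> derivable_pt_lim ext x (f' x).
Proof.
  intros Hx eps He.
  destruct (Hderiv x ltac:(lra) eps He) as [d [Hd0 Hq]].
  assert (Hpos : 0 < Rmin d (Rmin (x - a) (b - x))).
  { apply Rmin_pos; [lra | apply Rmin_pos; lra]. }
  exists (mkposreal _ Hpos). intros h Hh Ah. simpl in Ah.
  pose proof (Rmin_l d (Rmin (x - a) (b - x))).
  pose proof (Rmin_r d (Rmin (x - a) (b - x))).
  pose proof (Rmin_l (x - a) (b - x)). pose proof (Rmin_r (x - a) (b - x)).
  assert (Hxh : a <= x + h <= b) by (unfold Rabs in Ah; destruct Rcase_abs; lra).
  assert (Ad : R_dist (x + h) x < d) by (unfold R_dist; replace (x + h - x) with h by ring; lra).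
  assert (Hne : x + h <> x) by (intro; apply Hh; lra).
  specialize (Hq (x + h) (conj (conj Hxh Hne) Ad)). simpl in Hq.
  unfold R_dist in Hq. replace (x + h - x) with h in Hq by ring.
  unfold ext. now rewrite (clamp_id a b (x + h) Hxh), (clamp_id a b x ltac:(lra)).
Qed.

Lemma constant_of_null_derivative u v :
  a <= u -> u < v -> v <= b ->
  (forall x, u <= x <= v -> f' x = 0) -> f v = f u.
Proof.
  intros Hu Huv Hv Hnull.
  pose (pr x (Hx : u < x < v) :=
    exist (fun l => derivable_pt_abs ext x l) (f' x) (ext_derivative x ltac:(lra))).
  assert (Hconst : constant_D_eq ext (fun x => u <= x <= v) (ext u)).
  { apply (null_derivative_loc ext u v pr).
    - intros x Hx. apply ext_continuous. lra.
    - intros x Hx. apply Hnull. lra. }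
  rewrite <- ext_id, <- (ext_id u) by lra. apply Hconst. lra.
Qed.

Lemma derivative_separated u v :
  a <= u -> u < v -> v <= b -> f v <> f u -> f' u = 0 \/ f' v = 0 ->
  f_separated f' u v.
Proof.
  intros Hu Huv Hv Hfuv Hzero. apply NNPP. intro Hns.
  pose proof (const_of_not_separated f' u v Huv Hns) as Hconst.
  assert (Hu0 : f' u = 0).
  { destruct Hzero as [H0 | H0]; [exact H0 |]. rewrite <- H0. symmetry. apply Hconst. lra. }
  apply Hfuv. apply constant_of_null_derivative; try lra.
  intros x Hx. rewrite Hconst; assumption.
Qed.

Lemma interior_extremum_critical m :
  a < m < b ->
  (forall x, a <= x <= b -> ext m <= ext x) \/ (forall x, a <= x <= b -> ext x <= ext m) ->
  f' m = 0.
Proof.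
  intros Hm Hext.
  pose (pr := exist (fun l => derivable_pt_abs ext m l) (f' m) (ext_derivative m Hm)).
  change (derive_pt ext m pr = 0).
  destruct Hext as [Hmin | Hmax].
  - apply (deriv_minimum ext a b m pr); try lra. intros. apply Hmin. lra.
  - apply (deriv_maximum ext a b m pr); try lra. intros. apply Hmax. lra.
Qed.

Lemma extremum_off_level c :
  a <= c <= b -> f c <> f a ->
  exists m, a <= m <= b /\ f m <> f a /\
    ((forall x, a <= x <= b -> ext m <= ext x) \/
     (forall x, a <= x <= b -> ext x <= ext m)).
Proof.
  intros Hc Hfc. pose proof (ext_id c Hc) as Ec.
  destruct (Rle_lt_dec (f c) (f a)).
  - destruct (continuity_ab_min ext a b ltac:(lra) ext_continuous) as [m [Hmin Hm]].
    exists m. split; [exact Hm |]. split; [| now left].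
    specialize (Hmin c Hc). rewrite Ec, ext_id in Hmin by exact Hm. lra.
  - destruct (continuity_ab_maj ext a b ltac:(lra) ext_continuous) as [m [Hmax Hm]].
    exists m. split; [exact Hm |]. split; [| now right].
    specialize (Hmax c Hc). rewrite Ec, ext_id in Hmax by exact Hm. lra.
Qed.

End ClampedExtension.

Theorem mainTheorem1 (a b : R) (f f' : R -> R) :
  a < b ->
  (forall x, a <= x <= b -> is_deriv_within (fun y => a <= y <= b) f x (f' x)) ->
  f a = f b ->
  f_separated f a b ->
  exists z, a < z < b /\ f' z = 0 /\ f_separated f' a z /\ f_separated f' z b.
Proof.
  intros Hab Hderiv Hfab [_ [c [Hc Hfc]]].
  destruct (extremum_off_level a b f f' Hab Hderiv c Hc Hfc) as [z [Hz [Hfz Hext]]].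
  assert (Hz' : a < z < b).
  { split; apply Rnot_le_lt; intro; apply Hfz;
      [replace z with a | replace z with b]; lra. }
  assert (Hz0 : f' z = 0) by (eapply interior_extremum_critical; eauto).
  exists z. repeat split; try lra.
  - eapply derivative_separated; eauto; lra.
  - eapply derivative_separated; eauto; lra.
Qed.
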